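(* The VC-density of the edge relation on the class $\mathcal J$ of all Johnson graphs is $2$.
   Context: For $m\ge k$ and a set $X$ with $|X|=m$, the Johnson graph $J(m,k)$ has as vertices the $k$-element subsets of $X$, two vertices adjacent iff their intersection has size $k-1$; $\mathcal J=\{J(m,k)\mid k,m\in\mathbb N, k\le m\}$. For a graph $G$, the edge relation set system is $(V(G),\mathcal S_G)$ with $\mathcal S_G=\{N(v)\mid v\in V(G)\}$ ($N(v)$ the set of neighbours of $v$). Its shatter function is $\pi_G(n)=\max\{|\{S\cap A\mid S\in\mathcal S_G\}| : A\subseteq V(G), |A|=n\}$. For a class $\mathcal C$ of graphs, $\pi_{\mathcal C}(n)=\max\{\pi_G(n)\mid G\in\mathcal C\}$, the VC-dimension of the edge relation on $\mathcal C$ is the supremum over $G\in\mathcal C$ of the largest size of a set $A$ with $\{A\cap S\mid S\in\mathcal S_G\}=\mathcal P(A)$, and the VC-density of the edge relation on $\mathcal C$ is $\inf\{r\in\mathbb R^+ : \pi_{\mathcal C}(n)\in\mathcal O(n^r)\}$ if that VC-dimension is finite, and $\infty$ otherwise. *)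

From HB Require Import structures.
From mathcomp Require Import all_boot all_order all_algebra.
From mathcomp Require Import boolp classical_sets reals constructive_ereal ereal.
From mathcomp Require Import exp.
Set Implicit Arguments. Unset Strict Implicit. Unset Printing Implicit Defensive.
Import Order.TTheory GRing.Theory Num.Theory.

Section EdgeSetSystem.
Variables (V : finType) (e : rel V).

Definition nbhd (v : V) : {set V} := [set u | e v u].

Definition traces (A : {set V}) : {set {set V}} := [set nbhd v :&: A | v : V].

(* shatter function pi_G(n) (max over the empty family is 0) *)
Definition shatter_fn (n : nat) : nat :=
  \max_(A : {set V} | #|A| == n) #|traces A|.

Definition shattered (A : {set V}) : bool := traces A == powerset A.
End EdgeSetSystem.

Definition jvert (m k : nat) := {A : {set 'I_m} | #|A| == k}.

(* adjacent iff |u ∩ v| = k - 1 (written |u ∩ v| + 1 = k to avoid truncation) *)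
Definition jedge (m k : nat) : rel (jvert m k) :=
  fun u v => #|val u :&: val v|.+1 == k.

Definition johnson_vcdim_finite : Prop :=
  exists d : nat, forall m k : nat, k <= m ->
    forall A : {set jvert m k}, shattered (@jedge m k) A -> #|A| <= d.

Local Open Scope ring_scope.

(* pi_J(n) ∈ O(n^r), with pi_J(n) = sup_{k<=m} pi_{J(m,k)}(n) unfolded *)
Definition johnson_shatter_bigO (R : realType) (r : R) : Prop :=
  exists c : R, exists N : nat, forall n : nat, (N <= n)%N ->
    forall m k : nat, (k <= m)%N ->
      ((shatter_fn (@jedge m k) n)%:R : R) <= c * (n%:R `^ r).

Definition johnson_vc_density (R : realType) : \bar R :=
  if `[< johnson_vcdim_finite >] then
    (inf [set r : R | 0 < r /\ johnson_shatter_bigO r])%:E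
  else +oo%E.

(* Let T = N(v) :&: A contain two vertices a != b.  If a and b are
   not adjacent, then a :&: b \subset v \subset a :|: b and the two differ by four
   points, so v is one of 16 vertices determined by (a, b).  Otherwise T is a clique
   of common neighbours of the edge ab.  The only maximal cliques through ab are
   {c | a :&: b \subset c} and {c | c \subset a :|: b}, adjacent common neighbours
   of ab lie in the same one, and T is this clique, restricted to A, minus v.  So
   every trace is one of 1 + n + 20 n^2 sets determined by A, which bounds the
   VC-dimension by 11 and the VC-density by 2.
   Lower bound.  In J(n + 1, 2) the n vertices {0, i} of a star have all their
   2-subsets as traces: {i, j} is adjacent to exactly {0, i} and {0, j} among them.
   Hence pi(n) >= 'C(n, 2), which is not O(n^r) for r < 2. *)

From HB Require Import structures.
From mathcomp Require Import all_boot all_order all_algebra zify.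
From mathcomp Require boolp classical_sets reals constructive_ereal ereal exp lra.
Set Implicit Arguments. Unset Strict Implicit. Unset Printing Implicit Defensive.

Lemma leq_card_bigcup (T I : finType) (P : pred I) (F : I -> {set T}) :
  #|\bigcup_(i | P i) F i| <= \sum_(i | P i) #|F i|.
Proof.
elim/big_rec2: _ => [|i n X _ IH]; first by rewrite cards0.
by rewrite (leq_trans (leq_card_setU _ _)) // leq_add2l.
Qed.

Lemma card_set2I (T : finType) (a b : T) (X : {set T}) :
  a \notin X -> #|[set a; b] :&: X| = (b \in X).
Proof.
move=> aX; suff -> : [set a; b] :&: X = if b \in X then [set b] else set0.
  by case: (b \in X); rewrite ?cards1 ?cards0.
apply/setP=> x; rewrite !inE; have [->|xb] := eqVneq x b.
  by case: ifP => bX; rewrite ?inE ?eqxx ?orbT ?bX.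
by case: ifP => _; rewrite ?inE ?(negbTE xb) orbF; case: eqP => // ->; rewrite (negbTE aX).
Qed.

Lemma card_set2_eq2 (T : finType) (x y : T) : x != y -> #|[set x; y]| == 2.
Proof. by rewrite cards2 => ->. Qed.

Lemma poly_lt_exp2 n : 12 <= n -> 1 + n + 20 * n ^ 2 < 2 ^ n.
Proof.
elim: n => // n IH; rewrite leq_eqVlt => /predU1P[<- // | ]; rewrite ltnS => n12.
have := IH n12; have : 12 * n <= n * n by rewrite leq_mul2r n12 orbT.
by rewrite -!mulnn expnS; lia.
Qed.

Lemma sq_le_4binomial n : 2 <= n -> n ^ 2 <= 4 * 'C(n, 2).
Proof.
move=> n2; have e : 2 * 'C(n, 2) = n * n.-1 by rewrite -mul_bin_diag bin1.
rewrite -mulnn; nia.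
Qed.

Lemma card_traces_le_shatter (V : finType) (e : rel V) (A : {set V}) :
  #|traces e A| <= shatter_fn e #|A|.
Proof. exact: (leq_bigmax_cond (F := fun B => #|traces e B|) A). Qed.

Definition jadj (T : finType) (k : nat) (a b : {set T}) : bool := #|a :&: b|.+1 == k.

(* [side true a b] and [side false a b] cut out the two maximal cliques of the
   Johnson graph through an edge ab. *)
Definition side (T : finType) (s : bool) (a b c : {set T}) : bool :=
  if s then a :&: b \subset c else c \subset a :|: b.

Section JohnsonAdjacency.
Variables (T : finType) (k : nat).
Implicit Types (a b c v x : {set T}).

Lemma jadjC a b : jadj k a b = jadj k b a.
Proof. by rewrite /jadj setIC. Qed.

Lemma card_setI_lt a b : #|a| = k -> #|b| = k -> a != b -> #|a :&: b| < k.
Proof.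
move=> ha hb; apply: contraNT; rewrite -leqNgt => hk.
have /eqP/setIidPl ab : a :&: b == a by rewrite eqEcard subsetIl ha.
by rewrite eqEcard ab /= hb ha.
Qed.

Lemma common_neighbour_meet a b v : #|v| = k -> jadj k a v -> jadj k b v ->
  k <= #|a :&: b :&: v| + 2 ?= iff (v \subset a :|: b).
Proof.
move=> hv /eqP av /eqP bv; have hU := cardsUI (a :&: v) (b :&: v).
rewrite -setIUl setIACA setIid in hU.
have [le eqU] := subset_leqif_cards (subsetIr (a :|: b) v).
rewrite (sameP eqP setIidPr) hv in eqU.
split; first lia.
by rewrite -eqU; apply/eqP/eqP; lia.
Qed.

Lemma common_neighbour_side a b x : #|a| = k -> #|b| = k -> #|x| = k ->
  jadj k a b -> jadj k a x -> jadj k b x -> side false a b x = ~~ side true a b x.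
Proof.
move=> ha hb hx /eqP ab ax bx; rewrite /side -(sameP eqP (setIidPl (A := a :&: b))).
have [le1 <-] := common_neighbour_meet hx ax bx.
have [le2 <-] := subset_leqif_cards (subsetIl (a :&: b) x).
by case: eqP => ?; apply/eqP; lia.
Qed.

Lemma setI_jadj_eq a b v : jadj k a b -> jadj k a v -> a :&: b \subset v ->
  a :&: v = a :&: b.
Proof.
move=> /eqP ab /eqP av abv; apply/esym/eqP.
by rewrite eqEcard subsetI subsetIl abv /=; lia.
Qed.

Lemma setU_jadj_eq a b v : #|a| = k -> #|b| = k -> #|v| = k ->
  jadj k a b -> jadj k a v -> v \subset a :|: b -> a :|: v = a :|: b.
Proof.
move=> ha hb hv /eqP ab /eqP av vab; apply/eqP.
have := cardsUI a b; have := cardsUI a v.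
by rewrite eqEcard subUset subsetUl vab /=; lia.
Qed.

Lemma side_l s a b : side s a b a.
Proof. by case: s; rewrite /side ?subsetIl ?subsetUl. Qed.

Lemma side_r s a b : side s a b b.
Proof. by case: s; rewrite /side ?subsetIr ?subsetUr. Qed.

Lemma nonadjacent_common_neighbour a b v : #|a| = k -> #|b| = k -> #|v| = k ->
  a != b -> ~~ jadj k a b -> jadj k a v -> jadj k b v ->
  [/\ side true a b v, side false a b v & #|a :&: b| + 2 = k].
Proof.
move=> ha hb hv neq nab av bv; rewrite /jadj in nab.
rewrite /side -(sameP eqP (setIidPl (A := a :&: b))).
have lt := card_setI_lt ha hb neq.
have [le1 <-] := common_neighbour_meet hv av bv.
have [le2 <-] := subset_leqif_cards (subsetIl (a :&: b) v).
by split; [apply/eqP; lia | apply/eqP; lia | lia].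
Qed.

Lemma meet_join_not_jadj a b v c : #|c| = k ->
  jadj k a b -> jadj k a v -> jadj k b v -> jadj k a c -> jadj k b c ->
  a :&: b \subset v -> c \subset a :|: b -> ~~ jadj k c v.
Proof.
move=> hc ab av bv ac bc abv cab.
have eav := setI_jadj_eq ab av abv.
have ebv : b :&: v = b :&: a by apply: setI_jadj_eq bv _; rewrite 1?jadjC 1?setIC.
have cv_sub : c :&: v \subset a :&: b :&: c.
  rewrite subsetI subsetIl andbT; apply: subset_trans (setSI v cab) _.
  by rewrite setIUl eav ebv [b :&: a]setIC setUid.
have e := eqTleqif (common_neighbour_meet hc ac bc) cab.
by have := subset_leq_card cv_sub; rewrite /jadj; lia.
Qed.

Lemma common_neighbours_same_side s a b v c :
  #|a| = k -> #|b| = k -> #|v| = k -> #|c| = k ->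
  jadj k a b -> jadj k a v -> jadj k b v -> jadj k a c -> jadj k b c -> jadj k c v ->
  side s a b v -> side s a b c.
Proof.
move=> ha hb hv hc ab av bv ac bc cv.
have sc := common_neighbour_side ha hb hc ab ac bc.
rewrite /side in sc *; case: s => vs; apply: contraTT cv => cs.
  by apply: meet_join_not_jadj vs _; rewrite // sc.
by rewrite jadjC; apply: meet_join_not_jadj _ vs; rewrite // -[_ \subset c]negbK -sc.
Qed.

Lemma same_side_jadj s a b v c : #|a| = k -> #|b| = k -> #|v| = k -> #|c| = k ->
  jadj k a b -> side s a b v -> side s a b c -> v != c -> jadj k v c.
Proof.
move=> ha hb hv hc /eqP ab; rewrite /side /jadj => vs cs /(card_setI_lt hv hc) lt.
case: s vs cs => vs cs.
  by have := subset_leq_card (_ : a :&: b \subset v :&: c); rewrite subsetI vs cs; lia.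
have := subset_leq_card (_ : v :|: c \subset a :|: b); rewrite subUset vs cs.
by have := cardsUI a b; have := cardsUI v c; lia.
Qed.

Lemma side_jadj_eq s a b v : #|a| = k -> #|b| = k -> #|v| = k ->
  jadj k a b -> jadj k a v -> side s a b v -> side s a v =1 side s a b.
Proof.
move=> ha hb hv ab av; case: s => abv c; rewrite /side.
  by rewrite (setI_jadj_eq ab av abv).
by rewrite (setU_jadj_eq ha hb hv ab av abv).
Qed.

End JohnsonAdjacency.

Section JohnsonTraces.
Variables m k : nat.
Local Notation V := (jvert m k).
Local Notation N := (nbhd (@jedge m k)).
Implicit Types (a b c v w : V) (A : {set V}).

Lemma card_jvert a : #|val a| = k.
Proof. exact: eqP (valP a). Qed.

Lemma jedge_irr v : ~~ jedge v v.
Proof. by rewrite /jedge setIid card_jvert; lia. Qed.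

(* The size condition makes [val a :|: val b] exceed [val a :&: val b] by at most
   four points. *)
Definition between a b : {set V} :=
  [set w | [&& side true (val a) (val b) (val w), side false (val a) (val b) (val w)
            & k <= #|val a :&: val b| + 2]].

Definition edge_clique A s a b : {set V} :=
  [set c in A | side s (val a) (val b) (val c)].

Definition pair_traces A a b : {set {set V}} :=
  [set N w :&: A | w in between a b] :|:
  [set edge_clique A s a b | s : bool] :|: [set edge_clique A s a b :\ b | s : bool].

Definition trace_family A : {set {set V}} :=
  set0 |: [set [set a] | a in A] :|: \bigcup_(p in setX A A) pair_traces A p.1 p.2.

Lemma card_between a b : #|between a b| <= 16.
Proof.
set I := val a :&: val b; set U := val a :|: val b.
have [small|large] := ltnP (#|I| + 2) k.
  suff -> : between a b = set0 by rewrite cards0.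
  by apply/setP=> w; rewrite !inE -/I leqNgt small !andbF.
have inj : {in between a b &, injective (fun w : V => val w :\: I)}.
  move=> w1 w2; rewrite !inE => /and3P[s1 _ _] /and3P[s2 _ _] e.
  apply: val_inj; rewrite -(setID (val w1) I) -(setID (val w2) I).
  by rewrite (setIidPr s1) (setIidPr s2) e.
rewrite -(card_in_imset inj).
apply: leq_trans (subset_leq_card (_ : _ \subset powerset (U :\: I))) _.
  apply/subsetP=> X /imsetP[w]; rewrite inE => /and3P[_ wU _] ->.
  by rewrite inE setSD.
rewrite card_powerset cardsD.
rewrite (setIidPr (subset_trans (subsetIl _ _) (subsetUl _ _))).
have := cardsUI (val a) (val b); rewrite !card_jvert -/I -/U => hUI.
by apply: (@leq_pexp2l 2 _ 4); lia.
Qed.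

Lemma card_pair_traces A a b : #|pair_traces A a b| <= 20.
Proof.
rewrite /pair_traces; set X := [set N w :&: A | w in _]; set Y := [set _ | s : bool].
set Z := [set _ | s : bool].
have hX : #|X| <= 16 := leq_trans (leq_imset_card _ _) (card_between a b).
have hY : #|Y| <= 2 by rewrite (leq_trans (leq_imset_card _ _)) ?card_bool.
have hZ : #|Z| <= 2 by rewrite (leq_trans (leq_imset_card _ _)) ?card_bool.
rewrite (leq_trans (leq_card_setU _ _)) // (leq_trans (leq_add (leq_card_setU _ _) hZ)) //.
exact: leq_add (leq_add hX hY) (leqnn 2).
Qed.

Lemma card_trace_family A : #|trace_family A| <= 1 + #|A| + 20 * #|A| ^ 2.
Proof.
have h1 : #|set0 |: [set [set a] | a in A]| <= 1 + #|A|.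
  by rewrite (leq_trans (leq_card_setU _ _)) // cards1 leq_add2l leq_imset_card.
have h2 : #|\bigcup_(p in setX A A) pair_traces A p.1 p.2| <= 20 * #|A| ^ 2.
  apply: leq_trans (leq_card_bigcup _ _) _.
  apply: leq_trans (_ : _ <= \sum_(p in setX A A) 20) _.
    by apply: leq_sum => p _; exact: card_pair_traces.
  by rewrite sum_nat_const cardsX mulnC mulnn.
by rewrite /trace_family (leq_trans (leq_card_setU _ _)) // leq_add.
Qed.

Lemma mem_trace_family A a b X : a \in A -> b \in A -> X \in pair_traces A a b ->
  X \in trace_family A.
Proof.
move=> aA bA Xab; apply/setUP; right; apply/bigcupP.
by exists (a, b); rewrite ?in_setX ?aA.
Qed.

Lemma nonclique_trace_mem A v a b : a \in N v :&: A -> b \in N v :&: A ->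
  a != b -> ~~ jedge a b -> N v :&: A \in trace_family A.
Proof.
move=> /setIP[va aA] /setIP[vb bA] ab nab; rewrite !inE in va vb.
apply: (mem_trace_family aA bA); apply/setUP; left; apply/setUP; left.
apply/imsetP; exists v => //; rewrite inE.
have av : jadj k (val a) (val v) by rewrite jadjC.
have bv : jadj k (val b) (val v) by rewrite jadjC.
have ab' : val a != val b by rewrite (inj_eq val_inj).
have ck := card_jvert.
have [-> -> e] := nonadjacent_common_neighbour (ck a) (ck b) (ck v) ab' nab av bv.
by rewrite /= e.
Qed.

Lemma clique_trace A v a b : a \in N v :&: A -> b \in N v :&: A -> a != b ->
  {in N v :&: A &, forall c d, c != d -> jedge c d} ->
  exists2 s, side s (val a) (val b) (val v) & N v :&: A = edge_clique A s a b :\ v.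
Proof.
move=> aT bT ab cliq; have ck := card_jvert.
have ab' := cliq a b aT bT ab.
have /setIP[va _] := aT; have /setIP[vb _] := bT; rewrite !inE in va vb.
have av : jadj k (val a) (val v) by rewrite jadjC.
have bv : jadj k (val b) (val v) by rewrite jadjC.
have [s vs] : exists s, side s (val a) (val b) (val v).
  case sv: (side true (val a) (val b) (val v)); first by exists true.
  by exists false; rewrite (common_neighbour_side (ck a) (ck b) (ck v) ab' av bv) sv.
exists s => //; apply/setP=> c; apply/idP/idP.
  move=> cT; have /setIP[vc cA] := cT; rewrite inE in vc.
  have cv : c != v by apply: contraTneq vc => ->; exact: jedge_irr.
  rewrite !inE cv cA /=.
  have [-> | ca] := eqVneq c a; first exact: side_l.
  have [-> | cb] := eqVneq c b; first exact: side_r.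
  apply: (common_neighbours_same_side (ck a) (ck b) (ck v) (ck c) ab' av bv _ _ _ vs).
  - by apply: cliq; rewrite // eq_sym.
  - by apply: cliq; rewrite // eq_sym.
  - by rewrite jadjC.
rewrite !inE => /andP[cv /andP[cA cs]]; rewrite cA andbT.
apply: (same_side_jadj (ck a) (ck b) (ck v) (ck c) ab' vs cs).
by rewrite (inj_eq val_inj) eq_sym.
Qed.

Lemma clique_trace_mem A v a b : a \in N v :&: A -> b \in N v :&: A -> a != b ->
  {in N v :&: A &, forall c d, c != d -> jedge c d} -> N v :&: A \in trace_family A.
Proof.
move=> aT bT ab cliq; have [s vs ->] := clique_trace aT bT ab cliq.
have /setIP[va aA] := aT; have /setIP[_ bA] := bT; rewrite inE in va.
(* If [v \in A], the pair (a, v) determines the same clique as (a, b). *)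
have [vA|vA] := boolP (v \in A).
  have av : jadj k (val a) (val v) by rewrite jadjC.
  have ab' := cliq a b aT bT ab; have ck := card_jvert.
  apply: (mem_trace_family aA vA); apply/setUP; right; apply/imsetP; exists s => //.
  congr (_ :\ _); apply/setP=> c.
  by rewrite !inE (side_jadj_eq (ck a) (ck b) (ck v) ab' av vs).
apply: (mem_trace_family aA bA); apply/setUP; left; apply/setUP; right.
apply/imsetP; exists s => //; apply/setP=> c; rewrite !inE.
by case: eqP => // ->; rewrite (negbTE vA).
Qed.

Lemma trace_mem_family A v : N v :&: A \in trace_family A.
Proof.
set T := N v :&: A.
have [|/card_gt1P[a [b [aT bT ab]]]] := leqP #|T| 1.
  rewrite leq_eqVlt ltnS leqn0 => /orP[/cards1P[a eT]|/eqP/cards0_eq ->].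
    have aA : a \in A by rewrite (subsetP (subsetIr (N v) A)) // -/T eT set11.
    by apply/setUP; left; apply/setU1P; right; rewrite eT imset_f.
  by apply/setUP; left; exact: setU11.
have [/existsP[c /existsP[d /and4P[cT dT cd ncd]]] | /existsPn cliq] :=
  boolP [exists c, exists d, [&& c \in T, d \in T, c != d & ~~ jedge c d]].
  exact: nonclique_trace_mem cT dT cd ncd.
apply: clique_trace_mem aT bT ab _ => c d cT dT cd.
by have /existsPn/(_ d) := cliq c; rewrite cT dT cd /= negbK.
Qed.

End JohnsonTraces.

Lemma card_traces_johnson m k (A : {set jvert m k}) :
  #|traces (@jedge m k) A| <= 1 + #|A| + 20 * #|A| ^ 2.
Proof.
apply: leq_trans (card_trace_family A); apply: subset_leq_card.
by apply/subsetP=> _ /imsetP[v _ ->]; exact: trace_mem_family.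
Qed.

Lemma shatter_fn_johnson m k n : shatter_fn (@jedge m k) n <= 1 + n + 20 * n ^ 2.
Proof. by apply/bigmax_leqP => A /eqP <-; exact: card_traces_johnson. Qed.

Lemma johnson_vcdim_bounded : johnson_vcdim_finite.
Proof.
exists 11 => m k _ A /eqP shA; rewrite leqNgt; apply/negP => /poly_lt_exp2.
by rewrite -card_powerset -shA ltnNge card_traces_johnson.
Qed.

Definition pair_vertex m (x y : 'I_m) (xy : x != y) : jvert m 2 :=
  Sub [set x; y] (card_set2_eq2 xy).

Section Star.
Variable n : nat.

Definition star (i : 'I_n) : jvert n.+1 2 := pair_vertex (neq_lift ord0 i).

Lemma star_inj : injective star.
Proof.
move=> i j /(congr1 val) /= e.
have : lift ord0 i \in [set ord0; lift ord0 j] by rewrite -e !inE eqxx orbT.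
by rewrite !inE eq_sym (negbTE (neq_lift _ _)) => /eqP/lift_inj.
Qed.

Lemma jedge_pair_star (i j l : 'I_n) (ij : lift ord0 i != lift ord0 j) :
  jedge (pair_vertex ij) (star l) = (l == i) || (l == j).
Proof.
rewrite /jedge /= setIC card_set2I; last by rewrite !inE !(negbTE (neq_lift _ _)).
by rewrite !inE !(inj_eq lift_inj); case: (_ || _).
Qed.

Lemma binomial_le_shatter_johnson : 'C(n, 2) <= shatter_fn (@jedge n.+1 2) n.
Proof.
set A := star @: setT.
have cA : #|A| = n by rewrite card_imset ?cardsT ?card_ord //; exact: star_inj.
have := card_traces_le_shatter (@jedge n.+1 2) A; rewrite cA; apply: leq_trans.
rewrite -[X in 'C(X, 2)]cA -cards_draws.
apply: subset_leq_card; apply/subsetP => B.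
rewrite inE => /andP[BA /cards2P[x [y [xy eB]]]]; subst B.
have /imsetP[i _ ?] : x \in A by rewrite (subsetP BA) // !inE eqxx.
have /imsetP[j _ ?] : y \in A by rewrite (subsetP BA) // !inE eqxx orbT.
subst x y.
have ij : lift ord0 i != lift ord0 j.
  by rewrite (inj_eq lift_inj); apply: contraNneq xy => ->.
apply/imsetP; exists (pair_vertex ij) => //; apply/setP => c; rewrite !inE.
have [/imsetP[l _ ->]|cA'] := boolP (c \in A).
  by rewrite andbT jedge_pair_star !(inj_eq star_inj).
rewrite andbF; apply/negbTE/norP; split; apply: contraNneq cA' => ->; exact: imset_f.
Qed.

End Star.

Import boolp classical_sets reals constructive_ereal ereal exp lra.
Import Order.TTheory GRing.Theory Num.Theory.
Local Open Scope ring_scope.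

Section Density.
Variable R : realType.

Lemma inf_eq_min (E : set R) x : E x -> lbound E x -> inf E = x.
Proof.
move=> Ex lbx; apply/eqP; rewrite eq_le; apply/andP; split.
  by apply: ge_inf Ex; exists x.
by apply: lb_le_inf => //; exists x.
Qed.

Lemma powR_unbounded (s M : R) : 0 < s ->
  exists N : nat, forall n : nat, (N <= n)%N -> M <= n%:R `^ s.
Proof.
move=> s0; set M' := `|M| + 1; set x := M' `^ s^-1.
have M'0 : 0 < M' by rewrite ltr_wpDl.
exists (Num.truncn x).+1 => n Nn.
have xn : x <= n%:R by rewrite (le_trans (ltW (truncnS_gt x))) // ler_nat.
have x0 : 0 <= x := powR_ge0 _ _.
apply: (@le_trans _ _ M'); first by rewrite (le_trans (ler_norm M)) // lerDl.
rewrite (_ : M' = x `^ s); last by rewrite -powRrM mulVf ?gt_eqF // powRr1 // ltW.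
by apply: ge0_ler_powR; rewrite ?nnegrE // ?(ltW s0) // (le_trans x0).
Qed.

Lemma johnson_shatter_bigO2 : johnson_shatter_bigO (2%:R : R).
Proof.
exists 22%:R, 1%N => n n1 m k _.
rewrite powR_mulrn // -natrX -natrM ler_nat.
by apply: leq_trans (shatter_fn_johnson m k n) _; rewrite -mulnn; nia.
Qed.

Lemma johnson_shatter_bigO_ge2 (r : R) : johnson_shatter_bigO r -> 2%:R <= r.
Proof.
move=> [c [N bigO]]; rewrite leNgt; apply/negP => r2.
have s0 : 0 < 2%:R - r by rewrite subr_gt0.
have [N' large] := powR_unbounded (4%:R * c + 1) s0.
set n := maxn (maxn N N') 2.
have [nN nN' n2] : [/\ N <= n, N' <= n & 2 <= n]%N by rewrite !leq_max !leqnn !orbT.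
have n0 : 0 < n%:R :> R by rewrite ltr0n (leq_trans _ n2).
have sq : (n ^ 2)%:R <= 4%:R * (c * n%:R `^ r) :> R.
  apply: le_trans (ler_wpM2l (ler0n _ 4) (bigO n nN n.+1 2 (leqW n2))).
  rewrite -natrM ler_nat (leq_trans (sq_le_4binomial n2)) // leq_mul2l.
  exact: binomial_le_shatter_johnson.
have : n%:R `^ r * n%:R `^ (2%:R - r) <= n%:R `^ r * (4%:R * c) :> R.
  rewrite -powRD; last by rewrite (gt_eqF n0) implybT.
  by rewrite addrC subrK (powR_mulrn _ (ltW n0)) -natrX (le_trans sq) // mulrA mulrC.
rewrite ler_pM2l ?powR_gt0 //; have := large n nN'.
lra.
Qed.

End Density.

Theorem mainTheorem10 (R : realType) : johnson_vc_density R = (2%:R)%:E.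
Proof.
rewrite /johnson_vc_density asboolT; last exact: johnson_vcdim_bounded.
congr (_%:E); apply: inf_eq_min.
  by split; [rewrite ltr0n | exact: johnson_shatter_bigO2].
by move=> r [_ /johnson_shatter_bigO_ge2].
Qed.
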